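(* PARITY cannot be represented by normal programs: for every $n\ge 3$ there is no normal program $\Pi_n$ with $var(\Pi_n)=\{x_1,\dots,x_n\}$ and $Ans(\Pi_n)=$ PARITY$_n$. In particular there is no sequence of normal programs $\{\Pi_n\}_{n\ge1}$ with $Ans(\Pi_n)=$ PARITY$_n$ for all $n$.
   Context: A rule element is one of $\top$, $\bot$, $x$, $not\ x$, $not\ not\ x$, where $x$ is a variable. A (canonical) rule is $H\leftarrow B$ with $H$ a variable or $\bot$ and $B$ a finite set of rule elements; a canonical program is a finite set of rules; it is normal if it contains no occurrence of $not\ not$. For a set of variables $I$: $I\models\top$; $I\not\models\bot$; $I\models x$ iff $I\models not\ not\ x$ iff $x\in I$; $I\models not\ x$ iff $x\notin I$; $I\models B$ iff $I$ satisfies every element of $B$; $I$ is closed under $H\leftarrow B$ if $I\models B$ implies $I\models H$. The reduct $\Pi^I$ replaces $not\ not\ x$ by $\top$ if $x\in I$ else $\bot$, and $not\ x$ by $\top$ if $x\notin I$ else $\bot$; $I$ is an answer set of $\Pi$ if $I$ is the least set closed under all rules of $\Pi^I$; $Ans(\Pi)$ is the set of answer sets; $var(\Pi)$ is the set of variables occurring in $\Pi$. Strings $w\in\{0,1\}^n$ are identified with $\{x_i:w_i=1\}$. PARITY$_n$ is the set of strings in $\{0,1\}^n$ with an odd number of 1's. *)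

From Stdlib Require List.
From mathcomp Require Import all_boot.
Set Implicit Arguments. Unset Strict Implicit. Unset Printing Implicit Defensive.

(* Variables are natural numbers; the variable x_i is the number i. *)
Definition var := nat.

Inductive elem : Type :=
| ETop : elem
| EBot : elem
| EPos : var -> elem
| ENeg : var -> elem
| ENegNeg : var -> elem.

(* A rule H <- B : head is [Some x] for a variable x or [None] for bot;
   the body B is given by a finite list of rule elements (read as a set). *)
Record rule : Type := Rule { head : option var; body : seq elem }.

Definition program := seq rule.

Definition interp := var -> bool.

Definition sat_elem (I : interp) (e : elem) : bool :=
  match e with
  | ETop => true
  | EBot => false
  | EPos x => I x
  | ENeg x => ~~ I x
  | ENegNeg x => I x
  end.

Definition sat_body (I : interp) (B : seq elem) : bool := all (sat_elem I) B.

Definition sat_head (I : interp) (h : option var) : bool :=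
  match h with Some x => I x | None => false end.

Definition closed_rule (I : interp) (r : rule) : Prop :=
  sat_body I (body r) -> sat_head I (head r).

Definition closed_prog (I : interp) (P : program) : Prop :=
  forall r, List.In r P -> closed_rule I r.

Definition reduct_elem (I : interp) (e : elem) : elem :=
  match e with
  | ENegNeg x => if I x then ETop else EBot
  | ENeg x => if I x then EBot else ETop
  | e => e
  end.

Definition reduct_rule (I : interp) (r : rule) : rule :=
  Rule (head r) (map (reduct_elem I) (body r)).

Definition reduct (P : program) (I : interp) : program :=
  map (reduct_rule I) P.

Definition answer_set (P : program) (I : interp) : Prop :=
  closed_prog I (reduct P I) /\
  forall J : interp, closed_prog J (reduct P I) -> forall x, I x -> J x.

Definition normal_elem (e : elem) : bool :=
  match e with ENegNeg _ => false | _ => true end.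

Definition normal (P : program) : Prop :=
  forall r, List.In r P -> all normal_elem (body r).

Definition elem_vars (e : elem) : seq var :=
  match e with
  | ETop | EBot => [::]
  | EPos x | ENeg x | ENegNeg x => [:: x]
  end.

Definition rule_vars (r : rule) : seq var :=
  match head r with Some x => [:: x] | None => [::] end
  ++ flatten (map elem_vars (body r)).

Definition occurs (P : program) (x : var) : Prop :=
  exists r, List.In r P /\ x \in rule_vars r.

Definition vars_are (P : program) (n : nat) : Prop :=
  forall x, occurs P x <-> (1 <= x <= n).

(* The set {x_i : w_i = 1} for a string w in {0,1}^n (w_i is [nth false w (i-1)]). *)
Definition string_set (n : nat) (w : n.-tuple bool) : interp :=
  fun x => (0 < x <= n) && nth false w x.-1.

Definition parity (n : nat) (w : n.-tuple bool) : bool := odd (count id w).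

Definition represents_parity (P : program) (n : nat) : Prop :=
  forall I : interp,
    answer_set P I <->
    exists w : n.-tuple bool, parity w /\ forall x, I x = string_set w x.

(* Answer sets of a normal program form an antichain: if I is an answer set,
   the reduct by a larger set J only drops rules (a body literal [not x] that
   survives in the J-reduct survives in the I-reduct), so I is closed under the
   J-reduct and minimality of J forces J to be contained in I.  But PARITY_n,
   n >= 3, contains the nested strings 100...0 and 1110...0. *)
From mathcomp Require Import all_boot zify.
From Stdlib Require List.

Set Implicit Arguments.
Unset Strict Implicit.
Unset Printing Implicit Defensive.

Section NormalAntichain.

Variables (P : program) (I J : interp).
Hypotheses (normalP : normal P) (subIJ : forall x, I x -> J x).

Lemma sat_reduct_elem_anti (K : interp) (e : elem) :
  normal_elem e -> sat_elem K (reduct_elem J e) -> sat_elem K (reduct_elem I e).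
Proof.
case: e => //= x _; case Jx: (J x) => //= _.
by case Ix: (I x) => //; rewrite subIJ in Jx.
Qed.

Lemma closed_reduct_anti (K : interp) :
  closed_prog K (reduct P I) -> closed_prog K (reduct P J).
Proof.
move=> closedI _ /List.in_map_iff[r [<- Pr]].
have := closedI _ (List.in_map (reduct_rule I) _ _ Pr).
rewrite /closed_rule /sat_body /= !all_map => headI bodyJ; apply: headI.
have : all (predI normal_elem (preim (reduct_elem J) (sat_elem K))) (body r).
  by rewrite all_predI normalP.
by apply: sub_all => e /andP[]; apply: sat_reduct_elem_anti.
Qed.

Lemma answer_set_normal_antichain :
  answer_set P I -> answer_set P J -> forall x, J x -> I x.
Proof.
by move=> [closedI _] [_ minJ]; apply: minJ; apply: closed_reduct_anti.
Qed.

End NormalAntichain.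

Lemma size_ones_prefix (n k : nat) :
  size (nseq (minn k n) true ++ nseq (n - k) false) == n.
Proof. by rewrite size_cat !size_nseq; apply/eqP; lia. Qed.

(* The string 1^k 0^(n-k), truncated to length n when k > n. *)
Definition ones_prefix (n k : nat) : n.-tuple bool := Tuple (size_ones_prefix n k).

Lemma parity_ones_prefix (n k : nat) : k <= n -> parity (ones_prefix n k) = odd k.
Proof.
by move=> le_kn; rewrite /parity count_cat !count_nseq /= mul1n mul0n addn0
  (minn_idPl le_kn).
Qed.

Lemma string_set_ones_prefix (n k : nat) (x : var) :
  k <= n -> string_set (ones_prefix n k) x = (0 < x <= k).
Proof.
move=> le_kn; rewrite /string_set /= nth_cat size_nseq (minn_idPl le_kn).
by case: x => [|x] //=; rewrite !nth_nseq; do !case: ifP; lia.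
Qed.

Lemma answer_set_parity (P : program) (n : nat) (w : n.-tuple bool) :
  represents_parity P n -> parity w -> answer_set P (string_set w).
Proof. by move=> reprP odd_w; apply/reprP; exists w. Qed.

Lemma no_normal_parity (n : nat) : 3 <= n ->
  ~ exists P : program, normal P /\ vars_are P n /\ represents_parity P n.
Proof.
move=> le3n [P [normalP [_ reprP]]].
have ans k : k <= n -> odd k -> answer_set P (string_set (ones_prefix n k)).
  by move=> le_kn odd_k; apply: answer_set_parity; rewrite ?parity_ones_prefix.
have le1n : 1 <= n by lia.
have sub13 x : string_set (ones_prefix n 1) x -> string_set (ones_prefix n 3) x.
  by rewrite !string_set_ones_prefix //; lia.
have := answer_set_normal_antichain normalP sub13 (ans 1 le1n isT) (ans 3 le3n isT).
by move/(_ 2); rewrite !string_set_ones_prefix // => /(_ isT).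
Qed.

Theorem mainTheorem5 :
  (forall n : nat, 3 <= n ->
     ~ exists P : program, normal P /\ vars_are P n /\ represents_parity P n)
  /\
  ~ exists Pi : nat -> program,
      forall n : nat, 1 <= n ->
        normal (Pi n) /\ vars_are (Pi n) n /\ represents_parity (Pi n) n.
Proof.
split; first exact: no_normal_parity.
by case=> Pi reprPi; apply: (@no_normal_parity 3) => //; exists (Pi 3); apply: reprPi.
Qed.
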